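(* Let $q>1$, $p=\frac{q}{q-1}$, and assume Hypothesis (H$_q$). Then for all $x\in[a,b]$ and $\lambda\in[0,1]$, $$\Big|(1-\lambda)f(mx)+\lambda\frac{(x-a)f(ma)+(b-x)f(mb)}{b-a}-\frac{1}{m(b-a)}\int_{ma}^{mb}f(t)\,dt\Big|\le\frac{mA_4(1,\lambda,p)^{\frac1p}}{b-a}\Big\{(x-a)^2\Big(\frac{|f'(mx)|^q+\alpha m|f'(a)|^q}{\alpha+1}\Big)^{\frac1q}+(b-x)^2\Big(\frac{|f'(mx)|^q+\alpha m|f'(b)|^q}{\alpha+1}\Big)^{\frac1q}\Big\}.$$
   Context: $(\alpha,m)$-convexity: for $(\alpha,m)\in[0,1]\times(0,1]$ and an interval $K\subseteq[0,\infty)$, a function $g:K\to\mathbb{R}$ is $(\alpha,m)$-convex on $K$ if $g(tX+m(1-t)Y)\le t^\alpha g(X)+m(1-t^\alpha)g(Y)$ for all $X,Y\in K$ and $t\in[0,1]$ with $tX+m(1-t)Y\in K$ (convention $0^0=1$). Hypothesis (H$_q$): $I\subseteq[0,\infty)$ is an interval, $f:I\to\mathbb{R}$ is differentiable on the interior $I^\circ$, $m\in(0,1]$, $\alpha\in[0,1]$, $a<b$ with $ma,b\in I^\circ$, $f'$ is Lebesgue integrable on $[ma,mb]$, and $|f'|^q$ is $(\alpha,m)$-convex on $[ma,b]$. $\beta(u,v)=\int_0^1t^{u-1}(1-t)^{v-1}dt$ ($u,v>0$) is the Beta function and ${}_2F_1(a',b';c';z)=\frac{1}{\beta(b',c'-b')}\int_0^1t^{b'-1}(1-t)^{c'-b'-1}(1-zt)^{-a'}dt$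 ($c'>b'>0$, $|z|<1$) the hypergeometric function. For $\theta>0$, $p>1$: $A_4(\theta,\lambda,p)=\frac{1}{\theta p+1}$ if $\lambda=0$; $A_4(\theta,\lambda,p)=\frac{\lambda^{\frac{\theta p+1}{\theta}}}{\theta}\Big\{\beta\big(\tfrac1\theta,p+1\big)+\frac{(1-\lambda)^{p+1}}{p+1}\,{}_2F_1\big(\tfrac1\theta+p+1,\,p+1;\,p+2;\,1-\lambda\big)\Big\}$ if $0<\lambda<1$; $A_4(\theta,1,p)=\frac1\theta\beta\big(p+1,\tfrac1\theta\big)$. *)

From Stdlib Require Import Reals Lra ClassicalEpsilon.
Open Scope R_scope.

(* Real power t^a for t >= 0, with the convention 0^0 = 1 and 0^a = 0 for a <> 0. *)
Definition rpow (t a : R) : R :=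
  if Rlt_dec 0 t then Rpower t a
  else if Req_EM_T a 0 then 1 else 0.

(* Riemann integral of f over [a,b] as a plain real number (value of
   RiemannInt when f is Riemann integrable; 0 otherwise, never used). *)
Definition RInt (f : R -> R) (a b : R) : R :=
  match excluded_middle_informative
          (exists v, exists pr : Riemann_integrable f a b, RiemannInt pr = v) with
  | left H => proj1_sig (constructive_indefinite_description _ H)
  | right _ => 0
  end.

Definition Beta (u v : R) : R :=
  RInt (fun t => rpow t (u - 1) * rpow (1 - t) (v - 1)) 0 1.

(* Gauss hypergeometric function (Euler integral representation). *)
Definition F21 (a' b' c' z : R) : R :=
  / Beta b' (c' - b') *
  RInt (fun t => rpow t (b' - 1) * rpow (1 - t) (c' - b' - 1) * rpow (1 - z * t) (- a')) 0 1.

Definition A4 (theta lam p : R) : R :=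
  if Req_EM_T lam 0 then / (theta * p + 1)
  else if Req_EM_T lam 1 then / theta * Beta (p + 1) (/ theta)
  else rpow lam ((theta * p + 1) / theta) / theta *
       (Beta (/ theta) (p + 1) +
        rpow (1 - lam) (p + 1) / (p + 1) *
        F21 (/ theta + p + 1) (p + 1) (p + 2) (1 - lam)).

Definition alpha_m_convex (alpha m : R) (K : R -> Prop) (g : R -> R) : Prop :=
  forall X Y t, K X -> K Y -> 0 <= t <= 1 ->
    K (t * X + m * (1 - t) * Y) ->
    g (t * X + m * (1 - t) * Y) <= rpow t alpha * g X + m * (1 - rpow t alpha) * g Y.

Definition is_interval_nonneg (I : R -> Prop) : Prop :=
  (forall x, I x -> 0 <= x) /\
  (forall x y z, I x -> I z -> x <= y <= z -> I y).

(* Fix x in [a,b] and c in {a, b}.  Along the segment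
   u(s) = mc + s m(x - c), s in [0,1], the function
       E(s) = (x - c)(s - lam) f(u(s)) - (1/m) int_{mc}^{u(s)} f
   satisfies E'(s) = m (x - c)^2 (s - lam) f'(u(s)), and the left-hand side of
   the theorem is (E_a(1) - E_a(0) - E_b(1) + E_b(0)) / (b - a).  Each
   difference E(1) - E(0) is bounded by Hoelder's inequality applied to
   |s - lam| |f'(u(s))|, with (alpha,m)-convexity bounding |f'(u(s))|^q by
   s^alpha |f'(mx)|^q + m (1 - s^alpha) |f'(c)|^q.  Hoelder's inequality is
   proved in "primitive form" (no integrals): Young's inequality with a free
   parameter d is integrated through a mean-value comparison principle, and d
   is then optimized.  Finally the paper's constant A_4(1, lam, p), given by
   Beta and hypergeometric functions, is evaluated in closed form as
   int_0^1 |s - lam|^p ds = (lam^(p+1) + (1 - lam)^(p+1)) / (p + 1). *)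

From Stdlib Require Import Reals Lra ClassicalEpsilon.
From Coquelicot Require Import Coquelicot.
Open Scope R_scope.

Lemma Rpower_gt0 x r : 0 < Rpower x r.
Proof. unfold Rpower; apply exp_pos. Qed.

Lemma rpow_pos x r : 0 < x -> rpow x r = Rpower x r.
Proof. intros Hx; unfold rpow; destruct (Rlt_dec 0 x); [reflexivity | lra]. Qed.

Lemma rpow_npos x r : x <= 0 -> r <> 0 -> rpow x r = 0.
Proof.
intros Hx Hr; unfold rpow; destruct (Rlt_dec 0 x); [lra |].
destruct (Req_EM_T r 0); [contradiction | reflexivity].
Qed.

Lemma rpow_r0 x : rpow x 0 = 1.
Proof.
unfold rpow; destruct (Rlt_dec 0 x); [apply Rpower_O; lra |].
destruct (Req_EM_T 0 0); [reflexivity | lra].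
Qed.

Lemma rpow_ge0 x r : 0 <= rpow x r.
Proof.
unfold rpow; destruct (Rlt_dec 0 x); [left; apply Rpower_gt0 |].
destruct (Req_EM_T r 0); lra.
Qed.

Lemma rpow_1r r : rpow 1 r = 1.
Proof. rewrite rpow_pos by lra. unfold Rpower. rewrite ln_1, Rmult_0_r. apply exp_0. Qed.

Lemma rpow_small r : 0 < r -> forall eps, 0 < eps ->
  exists delta, 0 < delta /\ forall h, Rabs h < delta -> rpow h r < eps.
Proof.
intros Hr eps He. exists (Rpower eps (/ r)). split; [apply Rpower_gt0 |].
intros h Hh. destruct (Rle_dec h 0).
- rewrite rpow_npos by lra. exact He.
- rewrite rpow_pos by lra. rewrite Rabs_right in Hh by lra.
  replace eps with (Rpower (Rpower eps (/ r)) r).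
  + apply Rlt_Rpower_l; lra.
  + rewrite Rpower_mult, Rinv_l by lra. apply Rpower_1; lra.
Qed.

(* Coquelicot's generic rules are stated with [plus], [mult], [scal]; these
   versions apply directly to functions built from [Rplus], [Rmult], ... *)

Lemma is_derive_Req (f : R -> R) (x l l' : R) : is_derive f x l -> l = l' -> is_derive f x l'.
Proof. intros H ->; exact H. Qed.

Lemma is_derive_Rplus (f g : R -> R) (x a b : R) : is_derive f x a -> is_derive g x b ->
  is_derive (fun t => f t + g t) x (a + b).
Proof. rewrite !is_derive_Reals. intros. apply (derivable_pt_lim_plus f g); auto. Qed.

Lemma is_derive_Rminus (f g : R -> R) (x a b : R) : is_derive f x a -> is_derive g x b ->
  is_derive (fun t => f t - g t) x (a - b).
Proof. rewrite !is_derive_Reals. intros. apply (derivable_pt_lim_minus f g); auto. Qed.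

Lemma is_derive_Rmult (f g : R -> R) (x a b : R) : is_derive f x a -> is_derive g x b ->
  is_derive (fun t => f t * g t) x (a * g x + f x * b).
Proof. rewrite !is_derive_Reals. intros. apply (derivable_pt_lim_mult f g); auto. Qed.

Lemma is_derive_Rconst (c x : R) : is_derive (fun _ => c) x 0.
Proof. rewrite is_derive_Reals. apply derivable_pt_lim_const. Qed.

Lemma is_derive_Rid (x : R) : is_derive (fun t : R => t) x 1.
Proof. rewrite is_derive_Reals. apply derivable_pt_lim_id. Qed.

Lemma is_derive_Rscal (f : R -> R) (c x a : R) : is_derive f x a -> is_derive (fun t => c * f t) x (c * a).
Proof. rewrite !is_derive_Reals. intros. apply (derivable_pt_lim_scal f); auto. Qed.

Lemma is_derive_Rcomp (g h : R -> R) (x a b : R) : is_derive g (h x) b -> is_derive h x a ->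
  is_derive (fun t => g (h t)) x (b * a).
Proof. rewrite !is_derive_Reals. intros Hg Hh. exact (derivable_pt_lim_comp h g x a b Hh Hg). Qed.

Lemma is_derive_continuity_pt (f : R -> R) (x l : R) : is_derive f x l -> continuity_pt f x.
Proof. rewrite is_derive_Reals. intros H. apply derivable_continuous_pt. exists l; exact H. Qed.

Lemma continuity_pt_Rplus (f g : R -> R) x :
  continuity_pt f x -> continuity_pt g x -> continuity_pt (fun t => f t + g t) x.
Proof. intros Hf Hg. exact (continuity_pt_plus f g x Hf Hg). Qed.

Lemma continuity_pt_Rscal (f : R -> R) c x : continuity_pt f x -> continuity_pt (fun t => c * f t) x.
Proof. intros Hf. exact (continuity_pt_scal f c x Hf). Qed.

Lemma rpow_derive_pos (x r : R) : 0 < x -> is_derive (fun t => rpow t r) x (r * rpow x (r - 1)).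
Proof.
intros Hx. rewrite rpow_pos by lra. apply is_derive_Reals.
apply derivable_pt_lim_locally_ext with (f := fun t => Rpower t r) (a := 0) (b := x + 1).
- lra.
- intros z Hz. rewrite rpow_pos by lra. reflexivity.
- apply derivable_pt_lim_power; lra.
Qed.

Lemma rpow_derive_neg (x r : R) : x < 0 -> r <> 0 -> is_derive (fun t => rpow t r) x 0.
Proof.
intros Hx Hr. apply is_derive_Reals.
apply derivable_pt_lim_locally_ext with (f := fun _ => 0) (a := x - 1) (b := 0).
- lra.
- intros z Hz. rewrite rpow_npos by lra. reflexivity.
- apply derivable_pt_lim_const.
Qed.

Lemma rpow_derive_gt1 (x r : R) : 1 < r -> is_derive (fun t => rpow t r) x (r * rpow x (r - 1)).
Proof.
intros Hr. destruct (Rlt_dec 0 x) as [Hx | Hx]; [now apply rpow_derive_pos |].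
rewrite (rpow_npos x (r - 1)), Rmult_0_r by lra.
destruct (Rlt_dec x 0) as [Hx' | Hx']; [apply rpow_derive_neg; lra |].
assert (x = 0) by lra. subst x. apply is_derive_Reals. intros eps He.
destruct (rpow_small (r - 1) ltac:(lra) eps He) as [d [Hd Hsmall]].
exists (mkposreal d Hd). intros h Hh0 Hhd. simpl in Hhd.
rewrite Rplus_0_l, (rpow_npos 0 r), !Rminus_0_r by lra.
destruct (Rle_dec h 0).
- rewrite rpow_npos by lra. unfold Rdiv; rewrite Rmult_0_l, Rabs_R0; lra.
- rewrite rpow_pos by lra. replace r with ((r - 1) + 1) at 1 by ring.
  rewrite Rpower_plus, Rpower_1 by lra. unfold Rdiv.
  rewrite Rmult_assoc, Rinv_r, Rmult_1_r by lra.
  rewrite Rabs_right by (left; apply Rpower_gt0). rewrite <- rpow_pos by lra.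
  apply Hsmall; exact Hhd.
Qed.

Lemma rpow_cont_pt x r : 0 < r -> continuity_pt (fun t => rpow t r) x.
Proof.
intros Hr. destruct (Rlt_dec 0 x) as [Hx | Hx].
{ exact (is_derive_continuity_pt _ _ _ (rpow_derive_pos x r Hx)). }
destruct (Rlt_dec x 0) as [Hx' | Hx'].
{ apply (is_derive_continuity_pt _ _ 0). apply rpow_derive_neg; lra. }
assert (x = 0) by lra. subst x. intros eps He.
destruct (rpow_small r Hr eps He) as [d [Hd Hsmall]].
exists d; split; [lra |]. intros h [_ Hh]. simpl in *. unfold R_dist in *.
rewrite (rpow_npos 0 r), Rminus_0_r, Rabs_right by (try apply Rle_ge, rpow_ge0; lra).
apply Hsmall. rewrite Rminus_0_r in Hh. exact Hh.
Qed.

(** * Comparison principle *)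

(* If |E'| <= psi' on [0,1], then |E(1) - E(0)| <= psi(1) - psi(0); this is
   the derivative-level form of "|int E'| <= int psi'" used throughout. *)
Lemma derivative_comparison (E dE psi dpsi : R -> R) :
  (forall s, 0 < s < 1 -> is_derive E s (dE s)) ->
  (forall s, 0 < s < 1 -> is_derive psi s (dpsi s)) ->
  (forall s, 0 <= s <= 1 -> continuity_pt E s) ->
  (forall s, 0 <= s <= 1 -> continuity_pt psi s) ->
  (forall s, 0 <= s <= 1 -> Rabs (dE s) <= dpsi s) ->
  Rabs (E 1 - E 0) <= psi 1 - psi 0.
Proof.
intros HE Hpsi CE Cpsi Hb.
assert (H0 : Rmin 0 1 = 0) by (apply Rmin_left; lra).
assert (H1 : Rmax 0 1 = 1) by (apply Rmax_right; lra).
destruct (MVT_gen (fun s => psi s - E s) 0 1 (fun s => dpsi s - dE s)) as [c [Hc Hc_eq]].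
{ rewrite H0, H1; intros s Hs. apply is_derive_Rminus; auto. }
{ rewrite H0, H1; intros s Hs. apply continuity_pt_minus; auto. }
destruct (MVT_gen (fun s => psi s + E s) 0 1 (fun s => dpsi s + dE s)) as [c' [Hc' Hc'_eq]].
{ rewrite H0, H1; intros s Hs. apply is_derive_Rplus; auto. }
{ rewrite H0, H1; intros s Hs. apply continuity_pt_plus; auto. }
rewrite H0, H1 in Hc, Hc'.
pose proof (Hb c Hc) as B1. pose proof (Hb c' Hc') as B2.
apply Rabs_le_between in B1. apply Rabs_le_between in B2. apply Rabs_le. lra.
Qed.
(** * Young's inequality with a free parameter, and its optimization *)

Lemma exp_ge x : 1 + x <= exp x.
Proof. destruct (Req_dec x 0) as [-> | Hx]; [rewrite exp_0; lra | left; now apply exp_ineq1]. Qed.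

Lemma exp_convex t u v : 0 <= t <= 1 ->
  exp (t * u + (1 - t) * v) <= t * exp u + (1 - t) * exp v.
Proof.
intros Ht. set (w := t * u + (1 - t) * v).
(* tangent-line bounds of exp at w, evaluated at u and at v *)
assert (Tu : exp w * (1 + (u - w)) <= exp u).
{ replace u with (w + (u - w)) at 2 by ring. rewrite exp_plus.
  apply Rmult_le_compat_l; [left; apply exp_pos | apply exp_ge]. }
assert (Tv : exp w * (1 + (v - w)) <= exp v).
{ replace v with (w + (v - w)) at 2 by ring. rewrite exp_plus.
  apply Rmult_le_compat_l; [left; apply exp_pos | apply exp_ge]. }
replace (exp w) with (t * (exp w * (1 + (u - w))) + (1 - t) * (exp w * (1 + (v - w))))
  by (unfold w; ring).
apply Rplus_le_compat; apply Rmult_le_compat_l; lra.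
Qed.

Lemma weighted_amgm U V t : 0 <= U -> 0 <= V -> 0 < t < 1 ->
  rpow U t * rpow V (1 - t) <= t * U + (1 - t) * V.
Proof.
intros HU HV Ht.
destruct (Req_dec U 0) as [-> | HU'].
{ rewrite (rpow_npos 0 t), Rmult_0_l by lra. nra. }
destruct (Req_dec V 0) as [-> | HV'].
{ rewrite (rpow_npos 0 (1 - t)), Rmult_0_r by lra. nra. }
rewrite !rpow_pos by lra. unfold Rpower. rewrite <- exp_plus.
rewrite <- (exp_ln U) at 2 by lra. rewrite <- (exp_ln V) at 2 by lra.
apply exp_convex; lra.
Qed.

Lemma conjugate_exponent_eq p q : 1 < q -> / p + / q = 1 -> p = q / (q - 1).
Proof.
intros Hq Hpq. assert (Hp : / p = (q - 1) / q) by (replace (/ p) with (1 - / q) by lra; field; lra).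
rewrite <- (Rinv_inv p), Hp. field. lra.
Qed.

Lemma conjugate_exponent q : 1 < q -> / (q / (q - 1)) + / q = 1.
Proof. intros Hq. field. lra. Qed.

Lemma young_param p q w Y d : 1 < q -> / p + / q = 1 -> 0 <= w -> 0 <= Y -> 0 < d ->
  w * Y <= d * rpow w p / p + rpow Y q / (q * rpow d (q - 1)).
Proof.
intros Hq Hpq Hw HY Hd. pose proof (conjugate_exponent_eq p q Hq Hpq) as ->.
assert (Hp : 0 < q / (q - 1)) by (apply Rdiv_lt_0_compat; lra).
assert (Hdq : 0 < rpow d (q - 1)) by (rewrite rpow_pos by lra; apply Rpower_gt0).
assert (Hrhs : 0 <= d * rpow w (q / (q - 1)) / (q / (q - 1)) + rpow Y q / (q * rpow d (q - 1))).
{ pose proof (rpow_ge0 w (q / (q - 1))). pose proof (rpow_ge0 Y q).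
  apply Rplus_le_le_0_compat; apply Rdiv_le_0_compat; nra. }
destruct (Req_dec w 0) as [-> | Hw']; [rewrite Rmult_0_l; exact Hrhs |].
destruct (Req_dec Y 0) as [-> | HY']; [rewrite Rmult_0_r; exact Hrhs |].
set (U := d * rpow w (q / (q - 1))). set (V := rpow Y q / rpow d (q - 1)).
assert (HU : 0 <= U) by (unfold U; pose proof (rpow_ge0 w (q / (q - 1))); nra).
assert (HV : 0 <= V) by (unfold V; pose proof (rpow_ge0 Y q); apply Rdiv_le_0_compat; lra).
(* wY is the geometric mean of U and V with weights 1/p and 1/q *)
assert (Hgm : w * Y = rpow U (/ (q / (q - 1))) * rpow V (1 - / (q / (q - 1)))).
{ unfold U, V. rewrite !(rpow_pos w), !(rpow_pos Y), !(rpow_pos d) by lra.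
  rewrite !rpow_pos by (try apply Rdiv_lt_0_compat; try apply Rmult_lt_0_compat;
                         try apply Rpower_gt0; lra).
  unfold Rpower. rewrite <- exp_plus, ln_mult, ln_div, !ln_exp by (try lra; apply exp_pos).
  rewrite <- (exp_ln w) at 1 by lra. rewrite <- (exp_ln Y) at 1 by lra.
  rewrite <- exp_plus. f_equal. field. lra. }
rewrite Hgm. eapply Rle_trans.
- apply weighted_amgm; try lra. rewrite Rinv_div. split.
  + apply Rdiv_lt_0_compat; lra.
  + apply Rmult_lt_reg_r with q; [lra |]. unfold Rdiv. rewrite Rmult_assoc, Rinv_l; lra.
- right. unfold U, V. field. lra.
Qed.

(* If D <= C (d K / p + Q / (q d^(q-1))) for every d > 0, then the choice
   d = (Q/K)^(1/q) gives the Hoelder-type bound D <= C K^(1/p) Q^(1/q). *)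
Lemma optimize_young_param p q K Q C D : 1 < q -> / p + / q = 1 ->
  0 < K -> 0 <= Q -> 0 <= C ->
  (forall d, 0 < d -> D <= C * (d * K / p + Q / (q * rpow d (q - 1)))) ->
  D <= C * rpow K (/ p) * rpow Q (/ q).
Proof.
intros Hq Hpq HK HQ HC Hd. pose proof (conjugate_exponent_eq p q Hq Hpq) as ->.
set (p := q / (q - 1)).
assert (Hp : 0 < p) by (unfold p; apply Rdiv_lt_0_compat; lra).
destruct (Req_dec Q 0) as [-> | HQ'].
- (* letting d -> 0 shows D <= 0 *)
  rewrite (rpow_npos 0 (/ q)), Rmult_0_r by (try lra; apply Rinv_neq_0_compat; lra).
  destruct (Rle_dec D 0) as [| HD]; [assumption | exfalso].
  assert (HCK : 0 <= C * K) by nra.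
  set (d := D * p / (2 * (C * K + 1))).
  assert (Hd0 : 0 < d) by (unfold d; apply Rdiv_lt_0_compat; nra).
  specialize (Hd d Hd0). fold p in Hd.
  assert (Hval : C * (d * K / p + 0 / (q * rpow d (q - 1))) = D * (C * K) / (2 * (C * K + 1))).
  { rewrite Rdiv_0_l, Rplus_0_r. unfold d. field. split; lra. }
  rewrite Hval in Hd.
  assert (D * (C * K) / (2 * (C * K + 1)) < D); [| lra].
  apply Rmult_lt_reg_r with (2 * (C * K + 1)); [nra |].
  unfold Rdiv. rewrite Rmult_assoc, Rinv_l by nra. nra.
- set (d := Rpower (Q / K) (/ q)).
  assert (Hd0 : 0 < d) by apply Rpower_gt0.
  specialize (Hd d Hd0). fold p in Hd. eapply Rle_trans; [exact Hd | right].
  rewrite !rpow_pos by lra.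
  set (X := exp (ln K / p + ln Q / q)).
  assert (E1 : d * K = X).
  { unfold d, X, Rpower. rewrite ln_div by lra. rewrite <- (exp_ln K) at 2 by lra.
    rewrite <- exp_plus. f_equal. unfold p. field. lra. }
  assert (E2 : Q / Rpower d (q - 1) = X).
  { unfold d, X. rewrite Rpower_mult. unfold Rpower. rewrite ln_div by lra.
    rewrite <- (exp_ln Q) at 1 by lra. unfold Rdiv. rewrite <- exp_Ropp, <- exp_plus.
    f_equal. unfold p. field. lra. }
  assert (E3 : Rpower K (/ p) * Rpower Q (/ q) = X).
  { unfold X, Rpower. rewrite <- exp_plus. f_equal. field. split; lra. }
  pose proof (Rpower_gt0 d (q - 1)).
  replace (C * (d * K / p + Q / (q * Rpower d (q - 1))))
    with (C * ((d * K) / p + (Q / Rpower d (q - 1)) / q)) by (field; repeat split; lra).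
  rewrite E1, E2, Rmult_assoc, E3. unfold p. field. lra.
Qed.

(** * A Hoelder inequality in primitive form *)

(* This is Hoelder's inequality for  int_0^1 w y, obtained by integrating
   Young's inequality (via [derivative_comparison]) and optimizing in d. *)
Lemma holder_primitive_form p q C (E dE w y k L l : R -> R) :
  1 < q -> / p + / q = 1 -> 0 <= C ->
  (forall s, 0 < s < 1 -> is_derive E s (dE s)) ->
  (forall s, 0 <= s <= 1 -> continuity_pt E s) ->
  (forall s, 0 < s < 1 -> is_derive k s (rpow (w s) p)) ->
  (forall s, 0 <= s <= 1 -> continuity_pt k s) ->
  (forall s, 0 < s < 1 -> is_derive L s (l s)) ->
  (forall s, 0 <= s <= 1 -> continuity_pt L s) ->
  (forall s, 0 <= s <= 1 -> 0 <= w s /\ 0 <= y s) ->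
  (forall s, 0 <= s <= 1 -> Rabs (dE s) <= C * w s * y s) ->
  (forall s, 0 <= s <= 1 -> rpow (y s) q <= l s) ->
  0 < k 1 - k 0 ->
  Rabs (E 1 - E 0) <= C * rpow (k 1 - k 0) (/ p) * rpow (L 1 - L 0) (/ q).
Proof.
intros Hq Hpq HC HE CE Hk Ck HL CL Hwy Hb Hy Hk01.
pose proof (conjugate_exponent_eq p q Hq Hpq) as Hp_eq.
assert (Hp : 0 < p) by (rewrite Hp_eq; apply Rdiv_lt_0_compat; lra).
assert (HL01 : 0 <= L 1 - L 0).
{ eapply Rle_trans; [apply Rabs_pos | apply (derivative_comparison (fun _ => 0) (fun _ => 0) L l)]; auto.
  - intros; apply is_derive_Rconst.
  - intros; apply continuity_pt_const; intros ? ?; reflexivity.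
  - intros s Hs. rewrite Rabs_R0. pose proof (rpow_ge0 (y s) q). pose proof (Hy s Hs). lra. }
apply optimize_young_param; auto. intros d Hd.
assert (Hdq : 0 < rpow d (q - 1)) by (rewrite rpow_pos by lra; apply Rpower_gt0).
set (c := / (q * rpow d (q - 1))).
apply (derivative_comparison E dE (fun s => C * (d / p * k s + c * L s))
         (fun s => C * (d / p * rpow (w s) p + c * l s)) HE) in CE.
- eapply Rle_trans; [exact CE | right]. unfold c. field. lra.
- intros s Hs. apply is_derive_Rscal, is_derive_Rplus; apply is_derive_Rscal; auto.
- intros s Hs. apply continuity_pt_Rscal, continuity_pt_Rplus; apply continuity_pt_Rscal; auto.
- intros s Hs. destruct (Hwy s Hs) as [Hw Hys].
  eapply Rle_trans; [apply Hb, Hs |]. rewrite Rmult_assoc. apply Rmult_le_compat_l; [exact HC |].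
  eapply Rle_trans; [apply (young_param p q (w s) (y s) d); auto |].
  pose proof (Hy s Hs). unfold c. apply Rplus_le_compat; [right; field; lra |].
  unfold Rdiv. rewrite Rmult_comm. apply Rmult_le_compat_l; [left; apply Rinv_0_lt_compat; nra | lra].
Qed.

(* [abs_moment p lam] = int_0^1 |s - lam|^p ds, for lam in [0,1]. *)
Definition abs_moment (p lam : R) : R :=
  (rpow lam (p + 1) + rpow (1 - lam) (p + 1)) / (p + 1).

Definition abs_pow_primitive (p lam s : R) : R :=
  / (p + 1) * (rpow (s - lam) (p + 1) - rpow (lam - s) (p + 1)).

(* A primitive of s |-> s^alpha G + m (1 - s^alpha) H, the (alpha,m)-convexity
   bound for |f'|^q along a segment with end values G and H. *)
Definition convexity_primitive (alpha m G H s : R) : R :=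
  (G - m * H) / (alpha + 1) * rpow s (alpha + 1) + m * H * s.

Lemma rpow_abs_split w p : p <> 0 -> rpow (Rabs w) p = rpow w p + rpow (- w) p.
Proof.
intros Hp. destruct (Rlt_dec 0 w).
- rewrite Rabs_right, (rpow_npos (- w)) by lra. ring.
- rewrite (rpow_npos w), Rabs_left1 by lra. ring.
Qed.

Lemma abs_pow_primitive_derive (p lam s : R) : 0 < p ->
  is_derive (abs_pow_primitive p lam) s (rpow (Rabs (s - lam)) p).
Proof.
intros Hp. unfold abs_pow_primitive. eapply is_derive_Req.
- apply is_derive_Rscal, is_derive_Rminus.
  + apply (is_derive_Rcomp (fun w => rpow w (p + 1)) (fun t => t - lam)).
    * apply rpow_derive_gt1; lra.
    * apply is_derive_Rminus; [apply is_derive_Rid | apply is_derive_Rconst].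
  + apply (is_derive_Rcomp (fun w => rpow w (p + 1)) (fun t => lam - t)).
    * apply rpow_derive_gt1; lra.
    * apply is_derive_Rminus; [apply is_derive_Rconst | apply is_derive_Rid].
- rewrite rpow_abs_split by lra. replace (p + 1 - 1) with p by ring.
  replace (- (s - lam)) with (lam - s) by ring. field. lra.
Qed.

Lemma abs_pow_primitive_increment p lam : 0 < p -> 0 <= lam <= 1 ->
  abs_pow_primitive p lam 1 - abs_pow_primitive p lam 0 = abs_moment p lam.
Proof.
intros Hp Hl. unfold abs_pow_primitive, abs_moment.
rewrite (rpow_npos (lam - 1)), (rpow_npos (0 - lam)) by lra.
replace (lam - 0) with lam by ring. field. lra.
Qed.

Lemma abs_moment_pos p lam : 0 < p -> 0 <= lam <= 1 -> 0 < abs_moment p lam.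
Proof.
intros Hp Hl. unfold abs_moment. apply Rdiv_lt_0_compat; [| lra].
pose proof (rpow_ge0 lam (p + 1)). pose proof (rpow_ge0 (1 - lam) (p + 1)).
destruct (Req_dec lam 0) as [-> | Hl0].
- rewrite Rminus_0_r, rpow_1r. lra.
- rewrite (rpow_pos lam) in * by lra. pose proof (Rpower_gt0 lam (p + 1)). lra.
Qed.

Lemma convexity_primitive_derive (alpha m G H s : R) : 0 <= alpha -> 0 < s ->
  is_derive (convexity_primitive alpha m G H) s
    (rpow s alpha * G + m * (1 - rpow s alpha) * H).
Proof.
intros Ha Hs. unfold convexity_primitive. eapply is_derive_Req.
- apply is_derive_Rplus; apply is_derive_Rscal; [apply rpow_derive_pos; lra | apply is_derive_Rid].
- replace (alpha + 1 - 1) with alpha by ring. field. lra.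
Qed.

Lemma convexity_primitive_cont alpha m G H s : 0 <= alpha ->
  continuity_pt (convexity_primitive alpha m G H) s.
Proof.
intros Ha. unfold convexity_primitive.
apply continuity_pt_Rplus; apply continuity_pt_Rscal; [apply rpow_cont_pt; lra | apply continuity_pt_id].
Qed.

Lemma convexity_primitive_increment alpha m G H : 0 <= alpha ->
  convexity_primitive alpha m G H 1 - convexity_primitive alpha m G H 0
  = (G + alpha * m * H) / (alpha + 1).
Proof.
intros Ha. unfold convexity_primitive. rewrite rpow_1r, (rpow_npos 0) by lra. field. lra.
Qed.

Lemma convexity_holder_estimate p q lam alpha m G H C (E dE y : R -> R) :
  1 < q -> / p + / q = 1 -> 0 <= lam <= 1 -> 0 <= alpha -> 0 <= C ->
  (forall s, 0 < s < 1 -> is_derive E s (dE s)) ->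
  (forall s, 0 <= s <= 1 -> continuity_pt E s) ->
  (forall s, 0 <= s <= 1 -> 0 <= y s) ->
  (forall s, 0 <= s <= 1 -> Rabs (dE s) <= C * Rabs (s - lam) * y s) ->
  (forall s, 0 <= s <= 1 -> rpow (y s) q <= rpow s alpha * G + m * (1 - rpow s alpha) * H) ->
  Rabs (E 1 - E 0)
  <= C * rpow (abs_moment p lam) (/ p) * rpow ((G + alpha * m * H) / (alpha + 1)) (/ q).
Proof.
intros Hq Hpq Hl Ha HC HE CE Hy Hb HB.
assert (Hp : 0 < p) by (rewrite (conjugate_exponent_eq p q Hq Hpq); apply Rdiv_lt_0_compat; lra).
rewrite <- (abs_pow_primitive_increment p lam), <- (convexity_primitive_increment alpha m G H)
  by (auto; lra).
apply (holder_primitive_form p q C E dE (fun s => Rabs (s - lam)) y _ _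
         (fun s => rpow s alpha * G + m * (1 - rpow s alpha) * H)); auto.
- intros s _. apply abs_pow_primitive_derive; exact Hp.
- intros s _. exact (is_derive_continuity_pt _ _ _ (abs_pow_primitive_derive p lam s Hp)).
- intros s Hs. apply convexity_primitive_derive; lra.
- intros s _. apply convexity_primitive_cont; exact Ha.
- intros s Hs. split; [apply Rabs_pos | auto].
- rewrite abs_pow_primitive_increment by auto. apply abs_moment_pos; auto.
Qed.

(** * The integral identity along a segment *)

Lemma RInt_primitive_derive (f : R -> R) (lo hi a0 y : R) :
  (forall z, lo < z < hi -> continuity_pt f z) -> lo < a0 < hi -> lo < y < hi ->
  is_derive (fun t => RInt.RInt f a0 t) y (f y).
Proof.
intros Hc Ha Hy. apply (is_derive_RInt f (fun t => RInt.RInt f a0 t) a0 y).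
- exists (mkposreal (Rmin (y - lo) (hi - y)) ltac:(apply Rmin_glb_lt; lra)).
  intros b0 Hb. simpl in Hb. unfold ball in Hb; simpl in Hb.
  unfold AbsRing_ball, abs, minus, plus, opp in Hb; simpl in Hb.
  apply Rabs_def2 in Hb. pose proof (Rmin_l (y - lo) (hi - y)). pose proof (Rmin_r (y - lo) (hi - y)).
  apply (RInt_correct (V := R_CompleteNormedModule)).
  apply (ex_RInt_continuous (V := R_CompleteNormedModule)). intros z Hz.
  apply (proj1 (continuity_pt_filterlim f z)). apply Hc.
  pose proof (Rmin_l a0 b0). pose proof (Rmin_r a0 b0).
  pose proof (Rmax_l a0 b0). pose proof (Rmax_r a0 b0).
  unfold Rmin, Rmax in *. destruct (Rle_dec a0 b0); lra.
- apply (proj1 (continuity_pt_filterlim f y)). apply Hc; lra.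
Qed.

(* The half of the estimate coming from the segment [mc, mx], c in {a, b}.
   Along u(s) = mc + s m(x - c), the function
     E(s) = (x - c)(s - lam) f(u(s)) - (1/m) int_{mc}^{u(s)} f
   has E' = m (x - c)^2 (s - lam) f'(u(s)), and E(1) - E(0) is the quantity
   bounded below; (alpha,m)-convexity of |f'|^q between mx and c bounds
   |f'(u(s))|^q, so [convexity_holder_estimate] applies. *)
Lemma segment_estimate p q (f f' : R -> R) (m alpha a b c x lam lo hi : R) :
  1 < q -> / p + / q = 1 ->
  (forall z, lo < z < hi -> derivable_pt_lim f z (f' z)) ->
  lo < m * a -> b < hi -> 0 < m <= 1 -> 0 <= alpha -> 0 < a ->
  a <= c <= b -> a <= x <= b -> 0 <= lam <= 1 ->
  alpha_m_convex alpha m (fun y => m * a <= y <= b) (fun y => rpow (Rabs (f' y)) q) ->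
  Rabs ((x - c) * (1 - lam) * f (m * x) + (x - c) * lam * f (m * c)
        - / m * (RInt.RInt f (m * a) (m * x) - RInt.RInt f (m * a) (m * c)))
  <= m * (x - c) ^ 2 * rpow (abs_moment p lam) (/ p)
     * rpow ((rpow (Rabs (f' (m * x))) q + alpha * m * rpow (Rabs (f' c)) q) / (alpha + 1)) (/ q).
Proof.
intros Hq Hpq Hd Hlo Hhi Hm Ha Ha0 Hc Hx Hl Hconv.
set (P := fun t => RInt.RInt f (m * a) t).
set (u := fun s => (m * x - m * c) * s + m * c).
assert (Hf : forall z, lo < z < hi -> is_derive f z (f' z)) by (intros; apply is_derive_Reals; auto).
assert (HP : forall z, lo < z < hi -> is_derive P z (f z)).
{ intros z Hz. apply (RInt_primitive_derive f lo hi); [| nra | exact Hz].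
  intros w Hw. exact (is_derive_continuity_pt _ _ _ (Hf w Hw)). }
assert (Hmx : m * a <= m * x <= b) by nra.
assert (Hmc : m * a <= m * c <= b) by nra.
assert (Hu : forall s, 0 <= s <= 1 -> m * a <= u s <= b) by (intros; unfold u; nra).
set (E := fun s => (x - c) * (s - lam) * f (u s) - / m * (P (u s) - P (m * c))).
set (dE := fun s => m * (x - c) ^ 2 * (s - lam) * f' (u s)).
assert (HE : forall s, 0 <= s <= 1 -> is_derive E s (dE s)).
{ intros s Hs. pose proof (Hu s Hs) as Hus.
  assert (Hu' : is_derive u s (m * x - m * c)).
  { unfold u. eapply is_derive_Req.
    - apply is_derive_Rplus; [apply is_derive_Rscal, is_derive_Rid | apply is_derive_Rconst].
    - ring. }
  unfold E, dE. eapply is_derive_Req.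
  - apply is_derive_Rminus.
    + apply (is_derive_Rmult (fun s => (x - c) * (s - lam)) (fun s => f (u s))).
      * apply is_derive_Rscal, is_derive_Rminus; [apply is_derive_Rid | apply is_derive_Rconst].
      * apply (is_derive_Rcomp f u); [apply Hf; lra | exact Hu'].
    + apply is_derive_Rscal, is_derive_Rminus; [| apply is_derive_Rconst].
      apply (is_derive_Rcomp P u); [apply HP; lra | exact Hu'].
  - field. lra. }
assert (HE10 : E 1 - E 0 = (x - c) * (1 - lam) * f (m * x) + (x - c) * lam * f (m * c)
                           - / m * (P (m * x) - P (m * c))).
{ unfold E, u. replace ((m * x - m * c) * 1 + m * c) with (m * x) by ring.
  replace ((m * x - m * c) * 0 + m * c) with (m * c) by ring. ring. }
rewrite <- HE10.
apply (convexity_holder_estimate p q lam alpha m _ _ (m * (x - c) ^ 2) E dE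
         (fun s => Rabs (f' (u s)))); auto.
- pose proof (pow2_ge_0 (x - c)). nra.
- intros s Hs. apply HE; lra.
- intros s Hs. exact (is_derive_continuity_pt _ _ _ (HE s Hs)).
- intros s _. apply Rabs_pos.
- intros s _. unfold dE. rewrite !Rabs_mult, (Rabs_right m), (Rabs_right ((x - c) ^ 2))
    by (try apply Rle_ge, pow2_ge_0; lra). right; ring.
- intros s Hs. pose proof (Hconv (m * x) c s Hmx ltac:(nra) Hs) as Hcv.
  replace (s * (m * x) + m * (1 - s) * c) with (u s) in Hcv by (unfold u; ring).
  apply Hcv, Hu, Hs.
Qed.

(** * The constant A_4 for theta = 1 *)

Lemma RInt_of_is_RInt (g : R -> R) (a b v : R) : is_RInt g a b v -> RInt g a b = v.
Proof.
intros H.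
assert (Hex : ex_RInt g a b) by (exists v; exact H).
pose proof (ex_RInt_Reals_0 g a b Hex) as pr.
assert (Hv : RInt.RInt g a b = v) by (apply is_RInt_unique; exact H).
unfold RInt. destruct (excluded_middle_informative _) as [Hx | Hx].
- destruct (constructive_indefinite_description _ Hx) as [w [pr' Hw]]. simpl.
  rewrite <- Hw, <- RInt_Reals. exact Hv.
- exfalso. apply Hx. exists (RiemannInt pr), pr. reflexivity.
Qed.

Lemma continuity_pt_continuous (f : R -> R) (x : R) : continuity_pt f x -> continuous f x.
Proof. intros H. exact (proj1 (continuity_pt_filterlim f x) H). Qed.

(* Beta(u,1) = Beta(1,u) = 1/u; u > 1 keeps the primitive differentiable on [0,1]. *)
Lemma Beta_u_1 u : 1 < u -> Beta u 1 = / u.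
Proof.
intros Hu. unfold Beta. apply RInt_of_is_RInt. rewrite Rminus_diag.
apply (is_RInt_ext (fun t => rpow t (u - 1))).
{ intros t _. now rewrite rpow_r0, Rmult_1_r. }
replace (/ u) with (minus ((fun t => / u * rpow t u) 1) ((fun t => / u * rpow t u) 0)).
- apply (is_RInt_derive (fun t => / u * rpow t u)).
  + intros t _. eapply is_derive_Req; [apply is_derive_Rscal, rpow_derive_gt1; lra | field; lra].
  + intros t _. apply continuity_pt_continuous, rpow_cont_pt; lra.
- unfold minus, plus, opp; simpl. rewrite rpow_1r, (rpow_npos 0) by lra. ring.
Qed.

Lemma Beta_1_v v : 1 < v -> Beta 1 v = / v.
Proof.
intros Hv. unfold Beta. apply RInt_of_is_RInt. rewrite Rminus_diag.
apply (is_RInt_ext (fun t => rpow (1 - t) (v - 1))).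
{ intros t _. now rewrite rpow_r0, Rmult_1_l. }
set (F := fun t => - / v * rpow (1 - t) v).
replace (/ v) with (minus (F 1) (F 0)).
- apply (is_RInt_derive F).
  + intros t _. unfold F. eapply is_derive_Req.
    * apply is_derive_Rscal, (is_derive_Rcomp (fun w => rpow w v) (fun t => 1 - t)).
      -- apply rpow_derive_gt1; lra.
      -- apply is_derive_Rminus; [apply is_derive_Rconst | apply is_derive_Rid].
    * field; lra.
  + intros t _. apply continuity_pt_continuous.
    apply (continuity_pt_comp (fun t => 1 - t) (fun w => rpow w (v - 1))).
    * exact (is_derive_continuity_pt _ _ _ (is_derive_Rminus _ _ t 0 1 (is_derive_Rconst 1 t) (is_derive_Rid t))).
    * apply rpow_cont_pt; lra.
- unfold minus, plus, opp, F; simpl. rewrite Rminus_diag, Rminus_0_r, rpow_1r, (rpow_npos 0) by lra.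
  ring.
Qed.

(* The Euler integral of 2F1(p+2, p+1; p+2; 1-lam): the integrand has the
   explicit primitive (t / (1 - (1-lam) t))^(p+1) / (p+1). *)
Lemma hypergeometric_integral p lam : 0 < p -> 0 < lam < 1 ->
  RInt (fun t => rpow t p * rpow (1 - t) 0 * rpow (1 - (1 - lam) * t) (- (p + 2))) 0 1
  = / ((p + 1) * rpow lam (p + 1)).
Proof.
intros Hp Hl. apply RInt_of_is_RInt.
set (D := fun t => 1 - (1 - lam) * t).
assert (HD : forall t, 0 <= t <= 1 -> 0 < D t) by (intros; unfold D; nra).
apply (is_RInt_ext (fun t => rpow t p * rpow (D t) (- (p + 2)))).
{ intros t _. rewrite rpow_r0, Rmult_1_r. reflexivity. }
set (F := fun t => / (p + 1) * rpow (t * / D t) (p + 1)).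
assert (HD' : forall t, is_derive D t (- (1 - lam))).
{ intros t. unfold D. eapply is_derive_Req.
  - apply is_derive_Rminus; [apply is_derive_Rconst | apply is_derive_Rscal, is_derive_Rid].
  - ring. }
replace (/ ((p + 1) * rpow lam (p + 1))) with (minus (F 1) (F 0)).
- apply (is_RInt_derive F).
  + rewrite Rmin_left, Rmax_right by lra. intros t Ht. pose proof (HD t Ht) as Dt.
    unfold F. eapply is_derive_Req.
    * apply is_derive_Rscal, (is_derive_Rcomp (fun y => rpow y (p + 1)) (fun t => t * / D t)).
      -- apply rpow_derive_gt1; lra.
      -- apply (is_derive_Rmult (fun t => t) (fun t => / D t)); [apply is_derive_Rid |].
         apply is_derive_inv; [apply HD' | lra].
    * replace (p + 1 - 1) with p by ring.
      destruct (Req_dec t 0) as [-> | Ht0].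
      { rewrite Rmult_0_l, !(rpow_npos 0 p) by lra. ring. }
      assert (Hq : 0 < t * / D t) by (apply Rmult_lt_0_compat; [lra | apply Rinv_0_lt_compat; lra]).
      rewrite !rpow_pos by lra. unfold Rpower.
      rewrite ln_mult, ln_Rinv by (try lra; apply Rinv_0_lt_compat; lra).
      replace (- (p + 2) * ln (D t)) with (p * - ln (D t) + - (ln (D t) + ln (D t))) by ring.
      rewrite !exp_plus, exp_Ropp, exp_plus, exp_ln by lra.
      replace (p * (ln t + - ln (D t))) with (p * ln t + p * - ln (D t)) by ring. rewrite exp_plus.
      unfold D in *. field. repeat split; lra.
  + rewrite Rmin_left, Rmax_right by lra. intros t Ht. apply continuity_pt_continuous.
    apply continuity_pt_mult; [apply rpow_cont_pt; lra |].
    apply (continuity_pt_comp D (fun y => rpow y (- (p + 2)))).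
    * exact (is_derive_continuity_pt _ _ _ (HD' t)).
    * exact (is_derive_continuity_pt _ _ _ (rpow_derive_pos _ _ (HD t Ht))).
- unfold minus, plus, opp, F, D; simpl.
  replace (1 - (1 - lam) * 1) with lam by ring. rewrite Rmult_0_l, (rpow_npos 0) by lra.
  rewrite Rmult_1_l, !rpow_pos by (try lra; apply Rinv_0_lt_compat; lra).
  unfold Rpower. rewrite ln_Rinv by lra.
  replace ((p + 1) * - ln lam) with (- ((p + 1) * ln lam)) by ring.
  rewrite exp_Ropp. pose proof (exp_pos ((p + 1) * ln lam)). field. repeat split; lra.
Qed.

Lemma A4_theta_1 p lam : 0 < p -> 0 <= lam <= 1 -> A4 1 lam p = abs_moment p lam.
Proof.
intros Hp Hl. unfold A4, abs_moment.
destruct (Req_EM_T lam 0) as [-> | H0].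
{ rewrite (rpow_npos 0), Rminus_0_r, rpow_1r by lra. field. lra. }
destruct (Req_EM_T lam 1) as [-> | H1].
{ rewrite Rinv_1, Beta_u_1, Rminus_diag, (rpow_npos 0), rpow_1r by lra. field. lra. }
unfold F21. rewrite !Rinv_1, Beta_1_v by lra.
replace (p + 2 - (p + 1)) with 1 by ring. rewrite Beta_u_1 by lra.
replace (p + 1 - 1) with p by ring. replace (1 - 1) with 0 by ring.
replace (- (1 + p + 1)) with (- (p + 2)) by ring.
rewrite hypergeometric_integral by lra.
replace ((1 * p + 1) / 1) with (p + 1) by field.
rewrite (rpow_pos lam) by lra. pose proof (Rpower_gt0 lam (p + 1)).
field. repeat split; lra.
Qed.

Lemma interior_nonneg_pos (I : R -> Prop) (x : R) :
  is_interval_nonneg I -> interior I x -> 0 < x.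
Proof.
intros [HI0 _] [d Hd]. pose proof (cond_pos d).
assert (Hx : I (x - d / 2)).
{ apply Hd. unfold disc. replace (x - d / 2 - x) with (- (d / 2)) by ring.
  rewrite Rabs_Ropp, Rabs_right; lra. }
apply HI0 in Hx. lra.
Qed.

Lemma interval_nbhd (I : R -> Prop) (u v : R) :
  is_interval_nonneg I -> interior I u -> interior I v -> u <= v ->
  exists lo hi, lo < u /\ v < hi /\ forall z, lo < z < hi -> interior I z.
Proof.
intros [_ HI] [d1 H1] [d2 H2] Huv. pose proof (cond_pos d1). pose proof (cond_pos d2).
set (e := Rmin d1 d2 / 2).
assert (Hmin : 0 < Rmin d1 d2) by (apply Rmin_glb_lt; lra).
assert (He1 : 0 < e <= d1 / 2) by (unfold e; pose proof (Rmin_l d1 d2); lra).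
assert (He2 : e <= d2 / 2) by (unfold e; pose proof (Rmin_r d1 d2); lra).
assert (Iu : I (u - 3 * e / 2)).
{ apply H1. unfold disc. replace (u - 3 * e / 2 - u) with (- (3 * e / 2)) by ring.
  rewrite Rabs_Ropp, Rabs_right; lra. }
assert (Iv : I (v + 3 * e / 2)).
{ apply H2. unfold disc. replace (v + 3 * e / 2 - v) with (3 * e / 2) by ring.
  rewrite Rabs_right; lra. }
exists (u - e), (v + e). split; [lra |]. split; [lra |].
intros z Hz. exists (mkposreal (e / 2) ltac:(lra)). intros w Hw. unfold disc in Hw; simpl in Hw.
apply Rabs_def2 in Hw. apply (HI (u - 3 * e / 2) w (v + 3 * e / 2)); auto. lra.
Qed.

Lemma RInt_continuous_eq (f : R -> R) (lo hi a b : R) :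
  (forall z, lo < z < hi -> continuity_pt f z) -> lo < a <= b -> b < hi ->
  RInt f a b = RInt.RInt f a b.
Proof.
intros Hc Ha Hb. apply RInt_of_is_RInt, (RInt_correct (V := R_CompleteNormedModule)).
apply (ex_RInt_continuous (V := R_CompleteNormedModule)). intros z Hz.
rewrite Rmin_left, Rmax_right in Hz by lra. apply continuity_pt_continuous, Hc. lra.
Qed.

(* The two segment estimates (for c = a with primitive value P(ma) = 0, and for
   c = b) combine into the weighted trapezoid inequality: the left-hand side
   is their difference divided by b - a. *)
Lemma combine_segment_estimates (m a b x lam fx fa fb Px Pb K Ga Gb : R) :
  a < b -> 0 < m ->
  Rabs ((x - a) * (1 - lam) * fx + (x - a) * lam * fa - / m * (Px - 0))
    <= m * (x - a) ^ 2 * K * Ga ->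
  Rabs ((x - b) * (1 - lam) * fx + (x - b) * lam * fb - / m * (Px - Pb))
    <= m * (x - b) ^ 2 * K * Gb ->
  Rabs ((1 - lam) * fx + lam * (((x - a) * fa + (b - x) * fb) / (b - a)) - / (m * (b - a)) * Pb)
    <= m * K / (b - a) * ((x - a) ^ 2 * Ga + (b - x) ^ 2 * Gb).
Proof.
intros Hab Hm HA HB.
set (Da := (x - a) * (1 - lam) * fx + (x - a) * lam * fa - / m * (Px - 0)) in HA.
set (Db := (x - b) * (1 - lam) * fx + (x - b) * lam * fb - / m * (Px - Pb)) in HB.
replace ((1 - lam) * fx + lam * (((x - a) * fa + (b - x) * fb) / (b - a)) - / (m * (b - a)) * Pb)
  with ((Da - Db) * / (b - a)) by (unfold Da, Db; field; lra).
replace (m * K / (b - a) * ((x - a) ^ 2 * Ga + (b - x) ^ 2 * Gb))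
  with ((m * (x - a) ^ 2 * K * Ga + m * (x - b) ^ 2 * K * Gb) * / (b - a)) by (field; lra).
assert (Hinv : 0 < / (b - a)) by (apply Rinv_0_lt_compat; lra).
rewrite Rabs_mult, (Rabs_right (/ (b - a))) by lra.
apply Rmult_le_compat_r; [lra |].
unfold Rminus at 1. eapply Rle_trans; [apply Rabs_triang |]. rewrite Rabs_Ropp. lra.
Qed.

Theorem mainTheorem10
  (I : R -> Prop) (f f' : R -> R) (m alpha a b q : R)
  (HI : is_interval_nonneg I)
  (Hder : forall x, interior I x -> derivable_pt_lim f x (f' x))
  (Hm : 0 < m <= 1) (Halpha : 0 <= alpha <= 1) (Hab : a < b)
  (Hma : interior I (m * a)) (Hb : interior I b)
  (Hconv : alpha_m_convex alpha m (fun y => m * a <= y <= b)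
             (fun y => rpow (Rabs (f' y)) q))
  (Hq : 1 < q) :
  let p := q / (q - 1) in
  forall x lam, a <= x <= b -> 0 <= lam <= 1 ->
    Rabs ((1 - lam) * f (m * x)
          + lam * (((x - a) * f (m * a) + (b - x) * f (m * b)) / (b - a))
          - / (m * (b - a)) * RInt f (m * a) (m * b))
    <= m * rpow (A4 1 lam p) (/ p) / (b - a) *
       ((x - a) ^ 2 *
          rpow ((rpow (Rabs (f' (m * x))) q + alpha * m * rpow (Rabs (f' a)) q)
                / (alpha + 1)) (/ q)
        + (b - x) ^ 2 *
          rpow ((rpow (Rabs (f' (m * x))) q + alpha * m * rpow (Rabs (f' b)) q)
                / (alpha + 1)) (/ q)).
Proof.
intros p x lam Hx Hl.
assert (Hpq : / p + / q = 1) by (apply conjugate_exponent; exact Hq).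
assert (Hp : 0 < p) by (apply Rdiv_lt_0_compat; lra).
assert (Ha0 : 0 < a) by (pose proof (interior_nonneg_pos I _ HI Hma); nra).
destruct (interval_nbhd I (m * a) b HI Hma Hb ltac:(nra)) as [lo [hi [Hlo [Hhi Hint]]]].
assert (Hd : forall z, lo < z < hi -> derivable_pt_lim f z (f' z)) by auto.
pose proof (segment_estimate p q f f' m alpha a b a x lam lo hi Hq Hpq Hd Hlo Hhi Hm
              (proj1 Halpha) Ha0 ltac:(lra) Hx Hl Hconv) as HA.
pose proof (segment_estimate p q f f' m alpha a b b x lam lo hi Hq Hpq Hd Hlo Hhi Hm
              (proj1 Halpha) Ha0 ltac:(lra) Hx Hl Hconv) as HB.
rewrite RInt_point in HA.
assert (Hfc : forall z, lo < z < hi -> continuity_pt f z).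
{ intros z Hz. apply derivable_continuous_pt. exists (f' z). exact (Hd z Hz). }
rewrite A4_theta_1, (RInt_continuous_eq f lo hi) by (auto; try split; nra).
apply (combine_segment_estimates m a b x lam _ _ _ _ _ _ _ _ Hab (proj1 Hm) HA HB).
Qed.
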